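(* Let $n\ge0$ and let \[\begin{array}{ccc} G&\to&H\\ \downarrow&&\downarrow\\ K&\to&L\end{array}\] be a commutative square of graphs such that (1) every morphism in the square is a monomorphism; (2) the square is a pullback in $\mathsf{Graph}$; and (3) every graph map $I_1^{\square n}\to L$ factors through $H\to L$ or through $K\to L$. Then this square is an $n$-skeletal pushout.
   Context: A graph is a set with a reflexive symmetric relation (edges); graph maps preserve the relation; $\mathsf{Graph}$ is their category. $I_1$ is the graph with two vertices joined by an edge, and $I_1^{\square n}$ is its $n$-fold box product, where the box product $G\square H$ has vertex set $V(G)\times V(H)$ and $(v,w)\sim(v',w')$ iff ($v=v'$, $w\sim w'$) or ($v\sim v'$, $w=w'$). The $1$-nerve $N_1G$ is the cubical set (presheaf on the box category with faces, degeneracies and connections) whose $k$-cubes are graph maps $I_1^{\square k}\to G$, with structure maps induced by the corresponding maps $I_1^{\square k}\to I_1^{\square j}$. $\operatorname{sk}^n$ of a cubical set is the subobject generated by cubes of dimension $\le n$. A commutative square of graphs is an $n$-skeletal pushout if applying $\operatorname{sk}^n\circ N_1$ yields a pushout square of cubical sets. *)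

From mathcomp Require Import all_boot.
From mathcomp Require Import zify.

Set Implicit Arguments.
Unset Strict Implicit.
Unset Printing Implicit Defensive.

Record graph := Graph {
  vert :> Type;
  adj : vert -> vert -> Prop;
  adj_refl : forall x, adj x x;
  adj_sym : forall x y, adj x y -> adj y x }.

Record hom (G H : graph) := Hom {
  hfun :> G -> H;
  hom_adj : forall x y, adj x y -> adj (hfun x) (hfun y) }.

Definition hcomp (G H K : graph) (g : hom H K) (f : hom G H) : hom G K.
Proof.
  refine (@Hom G K (fun x => g (f x)) _).
  by move=> x y hxy; apply: hom_adj; apply: hom_adj.
Defined.

Definition mono (G H : graph) (f : hom G H) : Prop :=
  forall (X : graph) (u v : hom X G),
    (forall x, f (u x) = f (v x)) -> forall x, u x = v x.

Definition commutes (G H K L : graph) (f : hom G H) (g : hom G K)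
  (h : hom H L) (k : hom K L) : Prop :=
  forall x, h (f x) = k (g x).

Definition is_pullback (G H K L : graph) (f : hom G H) (g : hom G K)
  (h : hom H L) (k : hom K L) : Prop :=
  forall (X : graph) (p : hom X H) (q : hom X K),
    (forall x, h (p x) = k (q x)) ->
    (exists u : hom X G, (forall x, f (u x) = p x) /\ (forall x, g (u x) = q x))
    /\ (forall u1 u2 : hom X G,
          (forall x, f (u1 x) = p x) -> (forall x, g (u1 x) = q x) ->
          (forall x, f (u2 x) = p x) -> (forall x, g (u2 x) = q x) ->
          forall x, u1 x = u2 x).

Definition box_adj (G H : graph) (p q : G * H) : Prop :=
  (p.1 = q.1 /\ adj p.2 q.2) \/ (adj p.1 q.1 /\ p.2 = q.2).

Definition I1_adj (a b : bool) : Prop := True.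

(* Adjacency of I_1^{box n} on vertex set bool^n, obtained by unfolding
   the iterated box product  I_1 box (I_1 box (... box pt)). *)
Fixpoint cube_adj (s t : seq bool) : Prop :=
  match s, t with
  | [::], [::] => True
  | a :: s', b :: t' => (a = b /\ cube_adj s' t') \/ (I1_adj a b /\ s' = t')
  | _, _ => False
  end.

Lemma cube_adj_refl n (s : n.-tuple bool) : cube_adj s s.
Proof.
  case: s => s _ /=; elim: s => [|a s IH] //=; by left.
Qed.

Lemma cube_adj_sym n (s t : n.-tuple bool) : cube_adj s t -> cube_adj t s.
Proof.
  case: s t => s _ [t _] /=; elim: s t => [|a s IH] [|b t] //=.
  case=> [[-> /IH h]|[_ ->]]; [by left | by right].
Qed.

Definition cube (n : nat) : graph :=
  @Graph (n.-tuple bool) (fun s t => cube_adj s t)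
         (@cube_adj_refl n) (@cube_adj_sym n).

(* Positions are 0-based.                                             *)
Lemma face_size m (i : 'I_m.+1) (e : bool) (t : m.-tuple bool) :
  size (take i t ++ e :: drop i t) == m.+1.
Proof.
  rewrite size_cat /= size_take size_drop size_tuple.
  case: ltnP => ?; have := ltn_ord i; move=> ?; apply/eqP; lia.
Qed.
Definition face m (i : 'I_m.+1) (e : bool) (t : m.-tuple bool) : m.+1.-tuple bool :=
  Tuple (face_size i e t).

Lemma degen_size m (i : 'I_m.+1) (t : m.+1.-tuple bool) :
  size (take i t ++ drop i.+1 t) == m.
Proof.
  rewrite size_cat size_take size_drop size_tuple.
  case: ltnP => ?; have := ltn_ord i; move=> ?; apply/eqP; lia.
Qed.
Definition degen m (i : 'I_m.+1) (t : m.+1.-tuple bool) : m.-tuple bool :=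
  Tuple (degen_size i t).

Lemma conn_size m (i : 'I_m.+1) (e : bool) (t : m.+2.-tuple bool) :
  size (take i t ++ (if e then nth false t i || nth false t i.+1
                     else nth false t i && nth false t i.+1) :: drop i.+2 t) == m.+1.
Proof.
  rewrite size_cat /= size_take size_drop size_tuple.
  case: ltnP => ?; have := ltn_ord i; move=> ?; apply/eqP; lia.
Qed.
Definition conn m (i : 'I_m.+1) (e : bool) (t : m.+2.-tuple bool) : m.+1.-tuple bool :=
  Tuple (conn_size i e t).

Inductive boxmap (k : nat) : forall m, (k.-tuple bool -> m.-tuple bool) -> Prop :=
| bm_id : boxmap (fun v => v)
| bm_face m (th : k.-tuple bool -> m.-tuple bool) (i : 'I_m.+1) (e : bool) :
    boxmap th -> boxmap (fun v => face i e (th v))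
| bm_degen m (th : k.-tuple bool -> m.+1.-tuple bool) (i : 'I_m.+1) :
    boxmap th -> boxmap (fun v => degen i (th v))
| bm_conn m (th : k.-tuple bool -> m.+2.-tuple bool) (i : 'I_m.+1) (e : bool) :
    boxmap th -> boxmap (fun v => conn i e (th v)).

(* (N_1 G)_k = hom (cube k) G; the structure map along th : [k] -> [m]  *)
(* sends y in (N_1 G)_m to y o th.                                    *)
(* (sk^n N_1 G)_k = the k-cubes of the form y o th with y an m-cube,  *)
(* m <= n, th a box-category map (subobject generated by cubes of     *)
(* dimension <= n).                                                   *)
Definition in_sk (n : nat) (G : graph) (k : nat) (x : hom (cube k) G) : Prop :=
  exists (m : nat) (th : k.-tuple bool -> m.-tuple bool) (y : hom (cube m) G),
    [/\ m <= n, boxmap th & forall v, x v = y (th v)].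

Definition sk_cubes (n : nat) (G : graph) (k : nat) : Type :=
  { x : hom (cube k) G | in_sk n x }.

Lemma in_sk_comp n (G H : graph) (f : hom G H) k (x : hom (cube k) G) :
  in_sk n x -> in_sk n (hcomp f x).
Proof.
  case=> m [th [y [hm hth hx]]]; exists m, th, (hcomp f y); split=> //.
  by move=> v /=; rewrite hx.
Qed.

Definition sk_map (n : nat) (G H : graph) (f : hom G H) (k : nat)
  (x : sk_cubes n G k) : sk_cubes n H k :=
  exist _ (hcomp f (proj1_sig x)) (in_sk_comp f (proj2_sig x)).

Definition is_pushout_set (A B C D : Type) (i : A -> B) (j : A -> C)
  (b : B -> D) (c : C -> D) : Prop :=
  (forall a, b (i a) = c (j a)) /\
  forall (T : Type) (p : B -> T) (q : C -> T),
    (forall a, p (i a) = q (j a)) ->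
    (exists u : D -> T, (forall x, u (b x) = p x) /\ (forall y, u (c y) = q y))
    /\ (forall u1 u2 : D -> T,
          (forall x, u1 (b x) = p x) -> (forall y, u1 (c y) = q y) ->
          (forall x, u2 (b x) = p x) -> (forall y, u2 (c y) = q y) ->
          forall d, u1 d = u2 d).

(* n-skeletal pushout: sk^n o N_1 of the square is a pushout of cubical
   sets; colimits of presheaves are computed levelwise, so this means a
   pushout of sets at every level k. *)
Definition skeletal_pushout (n : nat) (G H K L : graph) (f : hom G H)
  (g : hom G K) (h : hom H L) (k : hom K L) : Prop :=
  forall lvl : nat,
    is_pushout_set (@sk_map n _ _ f lvl) (@sk_map n _ _ g lvl)
                   (@sk_map n _ _ h lvl) (@sk_map n _ _ k lvl).

From mathcomp Require Import all_boot zify.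
From Stdlib Require Import FunctionalExtensionality ProofIrrelevance ClassicalEpsilon.

(* A cube of sk^n N_1 L at level k has the form y o th with y an m-cube of L,
   m <= n, and th a box map.  As I_1^{box m} is a retract of I_1^{box n}, y lifts
   along h or k, so at every level the legs into sk^n N_1 L are jointly
   surjective; they are injective because h and k are monos.  If skeletal cubes
   of H and K agree in L, the pullback yields a cube w of G, and w is skeletal
   again: every box map th has a graph-map section sg over its image
   (th o sg o th = th), so w = (w o sg) o th.  A commutative square of sets with
   injective, jointly surjective legs whose overlaps come from the corner is a
   pushout. *)

Set Implicit Arguments.
Unset Strict Implicit.
Unset Printing Implicit Defensive.

Lemma cube_adjP (s t : seq bool) : cube_adj s t <->
  size s = size t /\ exists j, forall i, i != j -> nth false s i = nth false t i.
Proof.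
elim: s t => [|a s IH] [|b t] //=; try by split=> // -[].
- by split=> // _; split=> //; exists 0 => i _; rewrite !nth_nil.
split.
- case=> [[-> /IH [-> [j hj]]]|[_ ->]]; last by split=> //; exists 0 => -[|i].
  by split=> //; exists j.+1 => -[|i] //= hi; apply: hj.
case=> [[hs] [j hj]]; have [ab|nab] := eqVneq a b.
  left; split=> //; apply/IH; split=> //; exists j.-1 => i hi.
  by apply: (hj i.+1); apply: contra hi => /eqP <-.
right; split=> //; apply: (@eq_from_nth _ false) => // i _.
case: j hj => [|j] hj; first exact: (hj i.+1).
by move: (hj 0 isT) => /= ab; rewrite ab eqxx in nab.
Qed.

Definition conn_op (e a b : bool) : bool := if e then a || b else a && b.

Lemma nth_face m (i : 'I_m.+1) e (t : m.-tuple bool) j :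
  nth false (face i e t) j =
  if j < i then nth false t j else if j == i then e else nth false t j.-1.
Proof.
have hi := ltn_ord i.
rewrite /= nth_cat size_takel ?size_tuple //; case: ltnP => hj; first by rewrite nth_take.
case: eqP => [->|hne]; first by rewrite subnn.
by rewrite -[j - i](@prednK) /= ?nth_drop; [congr nth|]; lia.
Qed.

Lemma nth_degen m (i : 'I_m.+1) (t : m.+1.-tuple bool) j :
  nth false (degen i t) j = if j < i then nth false t j else nth false t j.+1.
Proof.
have hi := ltn_ord i.
rewrite /= nth_cat size_takel ?size_tuple; last by lia.
by case: ltnP => hj; [rewrite nth_take | rewrite nth_drop; congr nth; lia].
Qed.

Lemma nth_conn m (i : 'I_m.+1) e (t : m.+2.-tuple bool) j :
  nth false (conn i e t) j =
  if j < i then nth false t j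
  else if j == i then conn_op e (nth false t i) (nth false t i.+1)
  else nth false t j.+1.
Proof.
have hi := ltn_ord i.
rewrite /= nth_cat size_takel ?size_tuple; last by lia.
case: ltnP => hj; first by rewrite nth_take.
case: eqP => [->|hne]; first by rewrite subnn.
by rewrite -[j - i](@prednK) /= ?nth_drop; [congr nth|]; lia.
Qed.

Lemma degen_face m (i : 'I_m.+1) e (t : m.-tuple bool) : degen i (face i e t) = t.
Proof.
apply: val_inj; apply: (@eq_from_nth _ false); rewrite ?size_tuple // => j _.
by rewrite nth_degen !nth_face; case: ltnP => // h; rewrite ltnNge leqW //= gtn_eqF.
Qed.

Lemma face_adj m (i : 'I_m.+1) e (s t : m.-tuple bool) :
  cube_adj s t -> cube_adj (face i e s) (face i e t).
Proof.
move=> /cube_adjP [_ [j hj]]; apply/cube_adjP; split; first by rewrite !size_tuple.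
exists (if j < i then j else j.+1) => x hx; rewrite !nth_face.
case: ltnP => h1; first by apply: hj; move: hx; case: ltnP => ? /eqP ?; apply/eqP; lia.
case: eqP => h2 //; apply: hj; move: hx; case: ltnP => ? /eqP ?; apply/eqP; lia.
Qed.

Lemma degen_adj m (i : 'I_m.+1) (s t : m.+1.-tuple bool) :
  cube_adj s t -> cube_adj (degen i s) (degen i t).
Proof.
move=> /cube_adjP [_ [j hj]]; apply/cube_adjP; split; first by rewrite !size_tuple.
exists (if j < i then j else j.-1) => x hx; rewrite !nth_degen.
case: ltnP => h1; apply: hj; move: hx; case: ltnP => ? /eqP ?; apply/eqP; lia.
Qed.

Lemma conn_adj m (i : 'I_m.+1) e (s t : m.+2.-tuple bool) :
  cube_adj s t -> cube_adj (conn i e s) (conn i e t).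
Proof.
move=> /cube_adjP [_ [j hj]]; apply/cube_adjP; split; first by rewrite !size_tuple.
exists (if j < i then j else if j <= i.+1 then (i : nat) else j.-1) => x hx.
rewrite !nth_conn; case: ltnP => h1.
  apply: hj; move: hx; case: ltnP => ?; [|case: leqP => ?]; move=> /eqP ?; apply/eqP; lia.
case: eqP => h2.
  subst x; have [hA hB] : (i : nat) != j /\ i.+1 != j.
    move: hx; case: ltnP => ?; [|case: leqP => ?]; move=> /eqP ?;
    by split; apply/eqP; lia.
  by rewrite (hj _ hA) (hj _ hB).
apply: hj; move: hx; case: ltnP => ?; [|case: leqP => ?]; move=> /eqP ?; apply/eqP; lia.
Qed.

Lemma boxmap_adj k m (th : k.-tuple bool -> m.-tuple bool) :
  boxmap th -> forall s t : k.-tuple bool, cube_adj s t -> cube_adj (th s) (th t).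
Proof.
elim=> {m th} [|m th i e _ IH|m th i _ IH|m th i e _ IH] s t hst //.
- exact/face_adj/IH.
- exact/degen_adj/IH.
- exact/conn_adj/IH.
Qed.

Definition face_hom m (i : 'I_m.+1) e : hom (cube m) (cube m.+1) :=
  @Hom (cube m) (cube m.+1) _ (@face_adj m i e).
Definition degen_hom m (i : 'I_m.+1) : hom (cube m.+1) (cube m) :=
  @Hom (cube m.+1) (cube m) _ (@degen_adj m i).
Definition boxmap_hom k m (th : k.-tuple bool -> m.-tuple bool) (bth : boxmap th) :
  hom (cube k) (cube m) := @Hom (cube k) (cube m) _ (boxmap_adj bth).

Definition id_hom (G : graph) : hom G G := @Hom G G id (fun _ _ => id).

(* The constant value, if any, of [conn_op e a b] when [a] and [b] are either
   free ([None]) or constant ([Some _]). *)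
Definition conn_const (e : bool) (o1 o2 : option bool) : option bool :=
  match o1, o2 with
  | Some a, Some b => Some (conn_op e a b)
  | Some a, None | None, Some a => if a == e then Some a else None
  | None, None => None
  end.

Lemma conn_op_const e o1 o2 a1 a2 r : conn_const e o1 o2 = Some r ->
  (forall b, o1 = Some b -> a1 = b) -> (forall b, o2 = Some b -> a2 = b) ->
  conn_op e a1 a2 = r.
Proof.
move=> + h1 h2; case: o1 h1 h2 => [b1|] h1 h2; case: o2 h2 => [b2|] h2 //=.
- by case=> <-; rewrite (h1 b1) // (h2 b2).
- by case: eqP => // <- [<-]; rewrite (h1 b1) //; case: b1 {h1}; case: a2 {h2}.
- by case: eqP => // <- [<-]; rewrite (h2 b2) //; case: b2 {h2}; case: a1 {h1}.
Qed.

Lemma conn_op_section e x o1 o2 :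
  conn_op e (odflt x o1) (odflt (if o1 is Some _ then x else ~~ e) o2) =
  odflt x (conn_const e o1 o2).
Proof. by case: o1 o2 => [[]|] [[]|]; case: e; case: x. Qed.

(* [c j = Some a] means that coordinate [j] of [th] is constantly [a], so the
   image of [th] lies in the face cut out by [c]; [th o sg] is the retraction of
   the whole cube onto that face. *)
Definition face_section k m (th : k.-tuple bool -> m.-tuple bool)
  (c : nat -> option bool) (sg : hom (cube m) (cube k)) : Prop :=
  (forall v j a, c j = Some a -> nth false (th v) j = a) /\
  (forall w j, j < m -> nth false (th (sg w)) j = odflt (nth false w j) (c j)).

Section FaceSection.

Variables (k m : nat) (c : nat -> option bool).

Lemma face_section_face (th : k.-tuple bool -> m.-tuple bool) sg (i : 'I_m.+1) e :
  face_section th c sg ->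
  face_section (fun v => face i e (th v))
    (fun j => if j < i then c j else if j == i then Some e else c j.-1)
    (hcomp sg (degen_hom i)).
Proof.
case=> fixed sec; split=> [v j a|w j hj /=]; rewrite nth_face.
  by case: ltnP => ?; [exact: fixed | case: eqP => _; [case | exact: fixed]].
have hi := ltn_ord i; case: ltnP => h1; first by rewrite sec ?nth_degen ?h1 //; lia.
case: eqP => h2 //; have hij : i <= j.-1 by lia.
rewrite sec ?nth_degen; last by lia.
by rewrite ltnNge hij /= prednK //; lia.
Qed.

Lemma face_section_degen (th : k.-tuple bool -> m.+1.-tuple bool) sg (i : 'I_m.+1) :
  face_section th c sg ->
  face_section (fun v => degen i (th v)) (fun j => if j < i then c j else c j.+1)
    (hcomp sg (face_hom i false)).
Proof.
case=> fixed sec; split=> [v j a|w j hj /=]; rewrite nth_degen.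
  by case: ltnP => ?; exact: fixed.
case: ltnP => h1; first by rewrite sec ?nth_face ?h1 //; lia.
rewrite sec ?nth_face; last by lia.
by rewrite ltnNge ltnW //= gtn_eqF.
Qed.

Lemma face_section_conn (th : k.-tuple bool -> m.+2.-tuple bool) sg (i : 'I_m.+1) e :
  face_section th c sg ->
  face_section (fun v => conn i e (th v))
    (fun j => if j < i then c j
              else if j == i then conn_const e (c i) (c i.+1) else c j.+1)
    (hcomp sg (face_hom (inord (if c i is None then i.+1 else i)) (~~ e))).
Proof.
(* Inserting the neutral element [~~ e] of [conn_op e] next to a free coordinate
   undoes the connection. *)
case=> fixed sec; have hi := ltn_ord i.
set p : nat := if c i is None then i.+1 else i.
have hp : p < m.+2 by rewrite /p; case: (c i); lia.
split=> [v j a|w j hj /=]; rewrite nth_conn.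
  case: ltnP => ?; first exact: fixed.
  by case: eqP => _; [move/conn_op_const; apply; exact: fixed | exact: fixed].
have nth_w' x : nth false (face (inord p) (~~ e) w) x =
    if x < p then nth false w x else if x == p then ~~ e else nth false w x.-1.
  by rewrite nth_face inordK.
case: ltnP => h1.
  by rewrite sec ?nth_w' 1?ifT //; rewrite /p; case: (c i); lia.
case: eqP => [->|h2].
  have [hi1 hi2] : i < m.+2 /\ i.+1 < m.+2 by lia.
  rewrite !sec ?nth_w' // /p; case: (c i) => [a1|] /=.
    by rewrite ltnNge leqnSn /= gtn_eqF // (conn_op_section e (nth false w i) (Some a1)).
  by rewrite ltnSn ltnn eqxx (conn_op_section e (nth false w i) None).
rewrite sec ?nth_w' 1?ifF ?ifF //; try lia.
all: rewrite /p; case: (c i); lia.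
Qed.

End FaceSection.

Lemma boxmap_face_section k m (th : k.-tuple bool -> m.-tuple bool) :
  boxmap th -> exists c sg, face_section th c sg.
Proof.
elim=> {m th} [|m th i e _ [c [sg s]]|m th i _ [c [sg s]]|m th i e _ [c [sg s]]].
- by exists (fun _ => None), (id_hom _).
- by do 2!eexists; apply: face_section_face s.
- by do 2!eexists; apply: face_section_degen s.
- by do 2!eexists; apply: face_section_conn s.
Qed.

Lemma boxmap_section k m (th : k.-tuple bool -> m.-tuple bool) :
  boxmap th -> exists sg : hom (cube m) (cube k), forall v, th (sg (th v)) = th v.
Proof.
case/boxmap_face_section=> c [sg [fixed sec]]; exists sg => v.
apply: val_inj; apply: (@eq_from_nth _ false); rewrite ?size_tuple // => j hj.
by rewrite sec //; case E: (c j) => [a|] //=; rewrite (fixed v j a).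
Qed.

Lemma pushout_of_cover_pullback (A B C D : Type) (i : A -> B) (j : A -> C)
    (b : B -> D) (c : C -> D) :
  (forall a, b (i a) = c (j a)) -> injective b -> injective c ->
  (forall d, (exists x, b x = d) \/ (exists y, c y = d)) ->
  (forall x y, b x = c y -> exists a, i a = x /\ j a = y) ->
  is_pushout_set i j b c.
Proof.
move=> comm injb injc cover meet; split=> // T p q pq; split; last first.
  move=> u1 u2 h1 h2 h3 h4 d.
  by case: (cover d) => [[x <-]|[y <-]]; rewrite ?h1 ?h2 ?h3 ?h4.
have preimage d : {x | b x = d} + {y | c y = d}.
  case: (excluded_middle_informative (exists x, b x = d)) => [ex|nex].
    by left; apply: constructive_indefinite_description.
  by right; apply: constructive_indefinite_description; case: (cover d).
exists (fun d => match preimage d with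
                 | inl (exist x _) => p x
                 | inr (exist y _) => q y end).
split=> [x|y]; case: preimage => [[x' ex]|[y' ey]].
- by rewrite (injb _ _ ex).
- by have [a [<- <-]] := meet _ _ (esym ey); rewrite pq.
- by have [a [<- <-]] := meet _ _ ex; rewrite pq.
- by rewrite (injc _ _ ey).
Qed.

Lemma hom_ext (G H : graph) (u v : hom G H) : (forall x, u x = v x) -> u = v.
Proof.
case: u v => fu pu [fv pv] /= /functional_extensionality E; subst fv.
by rewrite (proof_irrelevance _ pu pv).
Qed.

Lemma sk_cubes_ext n (G : graph) k (a b : sk_cubes n G k) :
  (forall v, proj1_sig a v = proj1_sig b v) -> a = b.
Proof.
case: a b => [x px] [y py] /= /(@hom_ext (cube k) G x y) E; subst y.
by rewrite (proof_irrelevance _ px py).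
Qed.

Definition point : graph := @Graph unit (fun _ _ => True) (fun _ => I) (fun _ _ _ => I).

Lemma mono_inj (G H : graph) (f : hom G H) : mono f -> injective f.
Proof.
move=> mf x y E.
pose const (z : G) := @Hom point G (fun _ => z) (fun _ _ _ => adj_refl z).
exact: (mf point (const x) (const y) (fun _ => E) tt).
Qed.

Lemma sk_map_inj n (G H : graph) (f : hom G H) k :
  injective f -> injective (@sk_map n G H f k).
Proof.
move=> injf a b E; apply: sk_cubes_ext => v; apply: injf.
by have := f_equal (fun s => hfun (proj1_sig s) v) E.
Qed.

Lemma in_sk_comp_inj n (G H : graph) (f : hom G H) k (x : hom (cube k) G) :
  injective f -> in_sk n (hcomp f x) -> in_sk n x.
Proof.
move=> injf [m [th [y [lemn bth fxE]]]]; have [sg thK] := boxmap_section bth.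
have {}fxE v : f (x v) = y (th v) := fxE v.
exists m, th, (hcomp x sg); split=> // v /=.
by apply: injf; rewrite !fxE thK.
Qed.

Section Lifting.

Variables (H K L : graph) (h : hom H L) (k : hom K L).

Definition cubes_lift (m : nat) : Prop :=
  forall x : hom (cube m) L,
    (exists y : hom (cube m) H, forall v, h (y v) = x v) \/
    (exists z : hom (cube m) K, forall v, k (z v) = x v).

Lemma cubes_lift_retract m m' (s : hom (cube m) (cube m')) (r : hom (cube m') (cube m)) :
  (forall v, r (s v) = v) -> cubes_lift m' -> cubes_lift m.
Proof.
move=> rsK lift' x; case: (lift' (hcomp x r)) => [[y yE]|[z zE]].
  by left; exists (hcomp y s) => v; rewrite /= yE /= rsK.
by right; exists (hcomp z s) => v; rewrite /= zE /= rsK.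
Qed.

Lemma cubes_lift_le m n : m <= n -> cubes_lift n -> cubes_lift m.
Proof.
elim: n => [|n IH]; first by rewrite leqn0 => /eqP ->.
rewrite leq_eqVlt => /predU1P [-> //|lemn] liftn; apply: IH => //.
exact: (cubes_lift_retract (s := face_hom ord0 false) (r := degen_hom ord0)
                           (degen_face _ _)).
Qed.

Lemma sk_map_cover n lvl : cubes_lift n -> forall d : sk_cubes n L lvl,
  (exists y, sk_map h y = d) \/ (exists z, sk_map k z = d).
Proof.
move=> liftn [x [m [th [y0 [lemn bth xE]]]]].
case: (cubes_lift_le lemn liftn y0) => [[y yE]|[z zE]]; [left|right].
  have sky : in_sk n (hcomp y (boxmap_hom bth)) by exists m, th, y.
  by exists (exist _ _ sky); apply: sk_cubes_ext => v /=; rewrite yE xE.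
have skz : in_sk n (hcomp z (boxmap_hom bth)) by exists m, th, z.
by exists (exist _ _ skz); apply: sk_cubes_ext => v /=; rewrite zE xE.
Qed.

End Lifting.

Lemma sk_map_pullback n lvl (G H K L : graph)
    (f : hom G H) (g : hom G K) (h : hom H L) (k : hom K L) :
  injective f -> is_pullback f g h k ->
  forall y z, @sk_map n _ _ h lvl y = sk_map k z ->
    exists a, sk_map f a = y /\ sk_map g a = z.
Proof.
move=> injf pb [y sky] [z skz] E.
have hyz v : h (y v) = k (z v) by have := f_equal (fun s => hfun (proj1_sig s) v) E.
have [[w [fw gw]] _] := pb _ y z hyz.
have skw : in_sk n w.
  by apply: (in_sk_comp_inj injf); have -> : hcomp f w = y by apply: hom_ext.
by exists (exist _ w skw); split; apply: sk_cubes_ext.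
Qed.

Theorem lemma2p7 (n : nat) (G H K L : graph)
  (f : hom G H) (g : hom G K) (h : hom H L) (k : hom K L) :
  commutes f g h k ->
  mono f -> mono g -> mono h -> mono k ->
  is_pullback f g h k ->
  (forall x : hom (cube n) L,
      (exists y : hom (cube n) H, forall v, h (y v) = x v) \/
      (exists z : hom (cube n) K, forall v, k (z v) = x v)) ->
  skeletal_pushout n f g h k.
Proof.
move=> comm /mono_inj injf _ /mono_inj injh /mono_inj injk pb liftn lvl.
apply: pushout_of_cover_pullback.
- by move=> a; apply: sk_cubes_ext => v /=; apply: comm.
- exact: sk_map_inj.
- exact: sk_map_inj.
- exact: sk_map_cover.
- exact: sk_map_pullback.
Qed.
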